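(* Let $M,K\in\mathbb R^{n\times n}$ be symmetric positive definite, $\nu>0$, $\omega\ge0$, and \[ \mathcal M=\begin{bmatrix}M&\sqrt\nu(K-i\omega M)\\\sqrt\nu(K+i\omega M)&-M\end{bmatrix}\in\mathbb C^{2n\times2n}. \] (1) For $\mathcal P=\mathrm{diag}(P,P)$ with any real symmetric positive definite $P\in\mathbb R^{n\times n}$, the spectrum of $\mathcal P^{-1}\mathcal M$ is real and symmetric with respect to zero. (2) For $P=M+\sqrt\nu(K+\omega M)$ and $\mathcal P=\mathrm{diag}(P,P)$, the inf-sup constant $\gamma=\inf_{0\ne x}\sup_{0\ne w}\frac{|\langle\mathcal Mx,w\rangle|}{\|x\|_{\mathcal P}\|w\|_{\mathcal P}}$ and the norm $\|\mathcal B\|=\sup_{0\ne x}\sup_{0\ne w}\frac{|\langle\mathcal Mx,w\rangle|}{\|x\|_{\mathcal P}\|w\|_{\mathcal P}}$ satisfy \[ \gamma\ge\frac1{\sqrt3},\qquad\|\mathcal B\|\le1. \] Consequently every eigenvalue of $\mathcal P^{-1}\mathcal M$ lies in $[-1,-1/\sqrt3]\cup[1/\sqrt3,1]$.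
   Context: $\langle z,w\rangle=w^*z$ on $\mathbb C^{2n}$ and $\|x\|_{\mathcal P}=\langle\mathcal Px,x\rangle^{1/2}$; $x,w$ range over $\mathbb C^{2n}$. *)

(* Complex numbers: an arbitrary numClosedFieldType C
   (e.g. algC); "real" means \is Num.real. *)
From HB Require Import structures.
From mathcomp Require Import all_boot all_order all_algebra.
Set Implicit Arguments. Unset Strict Implicit. Unset Printing Implicit Defensive.
Import Order.TTheory GRing.Theory Num.Theory.
Local Open Scope ring_scope.

Definition inner (C : numClosedFieldType) (m : nat) (z w : 'cV[C]_m) : C :=
  \sum_(i < m) z i ord0 * (w i ord0)^*.

Definition pnorm (C : numClosedFieldType) (m : nat) (P : 'M[C]_m) (x : 'cV[C]_m) : C :=
  sqrtC (inner (P *m x) x).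

Definition realmx (C : numClosedFieldType) (m : nat) (A : 'M[C]_m) : Prop :=
  forall i j, A i j \is Num.real.

Definition real_spd (C : numClosedFieldType) (n : nat) (A : 'M[C]_n) : Prop :=
  [/\ realmx A, A^T = A &
      forall x : 'cV[C]_n, (forall i, x i ord0 \is Num.real) -> x != 0 ->
        0 < (x^T *m A *m x) ord0 ord0].

Definition calM (C : numClosedFieldType) (n : nat) (M K : 'M[C]_n) (nu om : C)
  : 'M[C]_(n + n) :=
  block_mx M (sqrtC nu *: (K - ('i * om) *: M))
           (sqrtC nu *: (K + ('i * om) *: M)) (- M).

Definition calP (C : numClosedFieldType) (n : nat) (P : 'M[C]_n) : 'M[C]_(n + n) :=
  block_mx P 0 0 P.

Definition rayq (C : numClosedFieldType) (m : nat) (A P : 'M[C]_m) (x w : 'cV[C]_m) : C :=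
  `| inner (A *m x) w | / (pnorm P x * pnorm P w).

From HB Require Import structures.
From mathcomp Require Import all_boot all_order all_algebra ring.
Import Order.TTheory GRing.Theory Num.Theory Num.Def.
Set Implicit Arguments. Unset Strict Implicit. Unset Printing Implicit Defensive.
Local Open Scope ring_scope.

(* The argument is Hermitian linear algebra on C^m with  dot z w = w^* z.
   - calM and calP(P) are self-adjoint and calP(P) is positive definite (a real
     SPD matrix is positive definite on complex vectors).  For such a pencil the
     eigenvalues of calP^-1 calM are real, with eigenvectors  calM z = lam calP z.
   - Part (1): the conjugate-linear map  flip (x1, x2) = (conj x2, - conj x1)
     anticommutes with calM and commutes with calP, so it sends an eigenvector
     for lam to one for -lam.
   - Continuity: [bounded_by A Q] says |<A x, w>|^2 <= <Q x, x> <Q w, w>.  It is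
     stable under sums and scalings and follows from Cauchy-Schwarz; splitting
     calM = diag(M, -M) + sqrt nu [0, K; K, 0] + sqrt nu om [0, -iM; iM, 0] with
     matching blocks of calP(M + sqrt nu (K + om M)) gives the norm bound 1.
   - Inf-sup: for x = (x1, x2) the test vector  w = (x1 + (1-i) x2, (1+i) x1 - x2)
     satisfies  Re <calM x, w> = ||x||^2  and  ||w||^2 = 3 ||x||^2.
   - The eigenvalue bounds follow by evaluating both estimates at an eigenvector. *)

Section Adjoint.
Variable C : numClosedFieldType.
Local Open Scope sesquilinear_scope.

Lemma trmxCM m n p (A : 'M[C]_(m, n)) (B : 'M[C]_(n, p)) : (A *m B) ^t* = B ^t* *m A ^t*.
Proof. by rewrite trmx_mul map_mxM. Qed.

Lemma trmxCD m n (A B : 'M[C]_(m, n)) : (A + B) ^t* = A ^t* + B ^t*.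
Proof. by rewrite linearD map_mxD. Qed.

Lemma trmxCN m n (A : 'M[C]_(m, n)) : (- A) ^t* = - A ^t*.
Proof. by rewrite linearN map_mxN. Qed.

Lemma trmxCZ m n k (A : 'M[C]_(m, n)) : (k *: A) ^t* = k^* *: A ^t*.
Proof. by rewrite linearZ map_mxZ. Qed.

Lemma trmxC0 m n : (0 : 'M[C]_(m, n)) ^t* = 0.
Proof. by rewrite linear0 map_mx0. Qed.

Lemma trmxC_eq0 m n (A : 'M[C]_(m, n)) : (A ^t* == 0) = (A == 0).
Proof. by apply/eqP/eqP=> [h|->]; [rewrite -[A]trmxCK h|]; rewrite trmxC0. Qed.

Definition dot m (z w : 'cV[C]_m) : C := (w ^t* *m z) 0 0.

Lemma innerE m (z w : 'cV[C]_m) : inner z w = dot z w.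
Proof. by rewrite /dot mxE; apply: eq_bigr => i _; rewrite !mxE mulrC. Qed.

Lemma dotC m (z w : 'cV[C]_m) : (dot z w)^* = dot w z.
Proof.
rewrite /dot !mxE rmorph_sum; apply: eq_bigr => i _.
by rewrite !mxE rmorphM mulrC; congr (_ * _); exact: conjCK.
Qed.

Lemma dot_adj m (A : 'M[C]_m) (z w : 'cV[C]_m) : dot (A *m z) w = dot z (A ^t* *m w).
Proof. by rewrite /dot trmxCM trmxCK mulmxA. Qed.

Lemma dot_col m1 m2 (a c : 'cV[C]_m1) (b d : 'cV[C]_m2) :
  dot (col_mx a b) (col_mx c d) = dot a c + dot b d.
Proof. by rewrite /dot tr_col_mx map_row_mx mul_row_col mxE. Qed.

Lemma dotDl m (z1 z2 w : 'cV[C]_m) : dot (z1 + z2) w = dot z1 w + dot z2 w.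
Proof. by rewrite /dot mulmxDr mxE. Qed.
Lemma dotZl m k (z w : 'cV[C]_m) : dot (k *: z) w = k * dot z w.
Proof. by rewrite /dot -scalemxAr mxE. Qed.
Lemma dotNl m (z w : 'cV[C]_m) : dot (- z) w = - dot z w.
Proof. by rewrite -scaleN1r dotZl mulN1r. Qed.
Lemma dotBl m (z1 z2 w : 'cV[C]_m) : dot (z1 - z2) w = dot z1 w - dot z2 w.
Proof. by rewrite dotDl dotNl. Qed.
Lemma dotDr m (z w1 w2 : 'cV[C]_m) : dot z (w1 + w2) = dot z w1 + dot z w2.
Proof. by rewrite /dot trmxCD mulmxDl mxE. Qed.
Lemma dotZr m k (z w : 'cV[C]_m) : dot z (k *: w) = k^* * dot z w.
Proof. by rewrite /dot trmxCZ -scalemxAl mxE. Qed.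
Lemma dotNr m (z w : 'cV[C]_m) : dot z (- w) = - dot z w.
Proof. by rewrite /dot trmxCN mulNmx mxE. Qed.
Lemma dotBr m (z w1 w2 : 'cV[C]_m) : dot z (w1 - w2) = dot z w1 - dot z w2.
Proof. by rewrite dotDr dotNr. Qed.
Lemma dot0l m (w : 'cV[C]_m) : dot 0 w = 0.
Proof. by rewrite /dot mulmx0 mxE. Qed.

End Adjoint.

Section HermitianForms.
Variable C : numClosedFieldType.
Local Open Scope sesquilinear_scope.

Definition selfadj m (A : 'M[C]_m) : Prop := A ^t* = A.
Definition psd m (Q : 'M[C]_m) : Prop := forall z, 0 <= dot (Q *m z) z.
Definition posdef m (Q : 'M[C]_m) : Prop := forall z, z != 0 -> 0 < dot (Q *m z) z.

Lemma posdef_psd m (Q : 'M[C]_m) : posdef Q -> psd Q.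
Proof.
move=> hQ z; have [->|nz] := eqVneq z 0; first by rewrite mulmx0 dot0l.
exact: ltW (hQ z nz).
Qed.

Lemma psdD m (Q1 Q2 : 'M[C]_m) : psd Q1 -> psd Q2 -> psd (Q1 + Q2).
Proof. by move=> p1 p2 z; rewrite mulmxDl dotDl addr_ge0. Qed.

Lemma psdZ m k (Q : 'M[C]_m) : 0 <= k -> psd Q -> psd (k *: Q).
Proof. by move=> k0 pQ z; rewrite -scalemxAl dotZl mulr_ge0. Qed.

Lemma selfadj_dotC m (A : 'M[C]_m) (z w : 'cV[C]_m) :
  selfadj A -> (dot (A *m z) w)^* = dot (A *m w) z.
Proof. by move=> hA; rewrite dotC dot_adj hA. Qed.

Lemma selfadj_dot_real m (A : 'M[C]_m) (z : 'cV[C]_m) :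
  selfadj A -> dot (A *m z) z \is Num.real.
Proof. by move=> hA; apply/CrealP; rewrite selfadj_dotC. Qed.

Lemma cauchy_schwarz m (Q : 'M[C]_m) (x y : 'cV[C]_m) : selfadj Q -> posdef Q ->
  `|dot (Q *m x) y| ^+ 2 <= dot (Q *m x) x * dot (Q *m y) y.
Proof.
move=> hQ pQ; have [->|nz] := eqVneq x 0.
  by rewrite mulmx0 !dot0l normr0 expr0n mul0r.
set a := dot (Q *m x) x; set c := dot (Q *m x) y; set b := dot (Q *m y) y.
have a_gt0 : 0 < a := pQ x nz.
have aJ : a^* = a by apply: conj_Creal; apply: gtr0_real.
have cJ : dot (Q *m y) x = c^* by rewrite selfadj_dotC.
have : 0 <= dot (Q *m (a *: y - c^* *: x)) (a *: y - c^* *: x) by exact: posdef_psd.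
have -> : dot (Q *m (a *: y - c^* *: x)) (a *: y - c^* *: x) = a * (a * b - c * c^*).
  rewrite mulmxBr -!scalemxAr dotBl !dotBr !dotZl !dotZr aJ conjCK cJ -/a -/b -/c.
  ring.
by rewrite pmulr_rge0 // subr_ge0 normCK.
Qed.

End HermitianForms.

Section RealSPD.
Variables (C : numClosedFieldType) (n : nat) (Q : 'M[C]_n).
Hypothesis hQ : real_spd Q.

Lemma real_spd_conj : map_mx conjC Q = Q.
Proof. by case: hQ => hr _ _; apply/matrixP=> i j; rewrite mxE (conj_Creal (hr i j)). Qed.

Lemma real_spd_selfadj : selfadj Q.
Proof. by case: hQ => _ hT _; rewrite /selfadj -map_trmx real_spd_conj hT. Qed.

Lemma real_spd_dot_sym (a b : 'cV[C]_n) : map_mx conjC a = a -> map_mx conjC b = b ->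
  dot (Q *m a) b = dot (Q *m b) a.
Proof.
case: hQ => _ hT _ aJ bJ; rewrite /dot -!map_trmx aJ bJ.
have tr11 (X : 'M[C]_1) : X 0 0 = X^T 0 0 by rewrite mxE.
by rewrite tr11 !trmx_mul trmxK hT mulmxA.
Qed.

(* A real symmetric positive definite matrix is positive definite on complex
   vectors: split  z = a + i b  with real  a, b. *)
Lemma real_spd_posdef : posdef Q.
Proof.
move=> z nz; case: (hQ) => _ _ hpos.
pose a := map_mx (@Re _) z; pose b := map_mx (@Im _) z.
have Ez : z = a + 'i *: b by apply/matrixP=> i j; rewrite !mxE -Crect.
have realJ (v : 'cV[C]_n) : (forall i, v i 0 \is Num.real) -> map_mx conjC v = v.
  by move=> hv; apply/matrixP=> i j; rewrite mxE ord1 (conj_Creal (hv i)).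
have aJ : map_mx conjC a = a by apply: realJ => i; rewrite mxE Creal_Re.
have bJ : map_mx conjC b = b by apply: realJ => i; rewrite mxE Creal_Im.
have quad_pos (v : 'cV[C]_n) : map_mx conjC v = v -> v != 0 -> 0 < dot (Q *m v) v.
  move=> vJ vnz; rewrite /dot -map_trmx vJ mulmxA; apply: hpos vnz => i.
  by apply/CrealP; rewrite -[in RHS]vJ mxE.
have quad_ge0 (v : 'cV[C]_n) : map_mx conjC v = v -> 0 <= dot (Q *m v) v.
  move=> vJ; have [->|vnz] := eqVneq v 0; first by rewrite mulmx0 dot0l.
  exact: ltW (quad_pos v vJ vnz).
have -> : dot (Q *m z) z = dot (Q *m a) a + dot (Q *m b) b.
  rewrite Ez mulmxDr -scalemxAr dotDl !dotDr !dotZl !dotZr.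
  rewrite (real_spd_dot_sym bJ aJ) conjCi.
  by move: (@mulCii C) => i2; ring: i2.
have [a0|anz] := eqVneq a 0; last exact: ltr_wpDr (quad_ge0 b bJ) (quad_pos a aJ anz).
have [b0|bnz] := eqVneq b 0; last exact: ltr_wpDl (quad_ge0 a aJ) (quad_pos b bJ bnz).
by move: nz; rewrite Ez a0 b0 scaler0 addr0 eqxx.
Qed.

End RealSPD.

Section Bounds.
Variable C : numClosedFieldType.

(* Two Cauchy-Schwarz type bounds add up (discrete Cauchy-Schwarz in C^2). *)
Lemma sqr_norm_addr_le (c1 c2 p1 p2 q1 q2 : C) :
  0 <= p1 -> 0 <= p2 -> 0 <= q1 -> 0 <= q2 ->
  `|c1| ^+ 2 <= p1 * q1 -> `|c2| ^+ 2 <= p2 * q2 ->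
  `|c1 + c2| ^+ 2 <= (p1 + p2) * (q1 + q2).
Proof.
move=> p1_ge0 p2_ge0 q1_ge0 q2_ge0 h1 h2.
set u1 := `|c1|; set u2 := `|c2|.
have u1_ge0 : 0 <= u1 := normr_ge0 c1; have u2_ge0 : 0 <= u2 := normr_ge0 c2.
have tri : `|c1 + c2| ^+ 2 <= (u1 + u2) ^+ 2.
  by rewrite ler_pXn2r ?nnegrE ?addr_ge0 // ler_normD.
have cross : 2 * u1 * u2 <= p1 * q2 + p2 * q1.
  rewrite -(ler_pXn2r (_ : 0 < 2)%N) ?nnegrE ?addr_ge0 ?mulr_ge0 //.
  apply: (@le_trans _ _ (4 * ((p1 * q2) * (p2 * q1)))).
    have -> : (2 * u1 * u2) ^+ 2 = 4 * (u1 ^+ 2 * u2 ^+ 2) by ring.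
    have -> : p1 * q2 * (p2 * q1) = (p1 * q1) * (p2 * q2) by ring.
    by rewrite ler_wpM2l // ler_pM ?exprn_ge0.
  rewrite -subr_ge0.
  have -> : (p1 * q2 + p2 * q1) ^+ 2 - 4 * (p1 * q2 * (p2 * q1)) =
            (p1 * q2 - p2 * q1) ^+ 2 by ring.
  by rewrite -realEsqr rpredB ?ger0_real ?mulr_ge0.
apply: (le_trans tri).
have -> : (u1 + u2) ^+ 2 = u1 ^+ 2 + u2 ^+ 2 + 2 * u1 * u2 by ring.
have -> : (p1 + p2) * (q1 + q2) = p1 * q1 + p2 * q2 + (p1 * q2 + p2 * q1) by ring.
by rewrite !lerD.
Qed.

(* [bounded_by A Q]: the sesquilinear form of A is bounded by the Hermitian
   form of Q,  |<A x, w>|^2 <= <Q x, x> <Q w, w>; for positive definite Q this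
   says that A has norm at most 1 as a map from the Q-norm to the dual norm. *)
Definition bounded_by m (A Q : 'M[C]_m) : Prop :=
  forall x w, `|dot (A *m x) w| ^+ 2 <= dot (Q *m x) x * dot (Q *m w) w.

Lemma bounded_by_self m (Q : 'M[C]_m) : selfadj Q -> posdef Q -> bounded_by Q Q.
Proof. by move=> hQ pQ x w; exact: cauchy_schwarz. Qed.

Lemma bounded_byD m (A1 A2 Q1 Q2 : 'M[C]_m) : psd Q1 -> psd Q2 ->
  bounded_by A1 Q1 -> bounded_by A2 Q2 -> bounded_by (A1 + A2) (Q1 + Q2).
Proof.
move=> pQ1 pQ2 b1 b2 x w; rewrite !mulmxDl !dotDl.
by apply: sqr_norm_addr_le; rewrite ?pQ1 ?pQ2 ?b1 ?b2.
Qed.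

Lemma bounded_byZ m k (A Q : 'M[C]_m) :
  bounded_by A Q -> bounded_by (k *: A) (`|k| *: Q).
Proof.
move=> bA x w; rewrite -!scalemxAl !dotZl normrM exprMn.
have -> : `|k| * dot (Q *m x) x * (`|k| * dot (Q *m w) w) =
          `|k| ^+ 2 * (dot (Q *m x) x * dot (Q *m w) w) by ring.
by rewrite ler_wpM2l ?exprn_ge0.
Qed.

Lemma bounded_by_unitZ m k (A Q : 'M[C]_m) :
  `|k| = 1 -> bounded_by A Q -> bounded_by (k *: A) Q.
Proof. by move=> k1 /(bounded_byZ k); rewrite k1 scale1r. Qed.

Lemma norm_le_sqrtCM (c X W : C) : 0 <= X -> 0 <= W -> `|c| ^+ 2 <= X * W ->
  `|c| <= sqrtC X * sqrtC W.
Proof.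
move=> X_ge0 W_ge0 h; rewrite -sqrtCM ?nnegrE // -(sqrCK (normr_ge0 c)).
by rewrite ler_sqrtC ?nnegrE ?exprn_ge0 ?mulr_ge0.
Qed.

Lemma rayq_le1 m (A Q : 'M[C]_m) (x w : 'cV[C]_m) : posdef Q -> bounded_by A Q ->
  x != 0 -> w != 0 -> rayq A Q x w <= 1.
Proof.
move=> pQ bA nx nw; have Xp := pQ x nx; have Wp := pQ w nw.
rewrite /rayq /pnorm !innerE ler_pdivrMr ?mul1r ?mulr_gt0 ?sqrtC_gt0 //.
by apply: norm_le_sqrtCM; [exact: ltW | exact: ltW | exact: bA].
Qed.

End Bounds.

Section BlockDiagonal.
Variable C : numClosedFieldType.

Lemma col_mx_surj m1 m2 (x : 'cV[C]_(m1 + m2)) : exists x1 x2, x = col_mx x1 x2.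
Proof. by exists (usubmx x), (dsubmx x); rewrite vsubmxK. Qed.

Lemma calP_col n (Q : 'M[C]_n) (x1 x2 : 'cV[C]_n) :
  calP Q *m col_mx x1 x2 = col_mx (Q *m x1) (Q *m x2).
Proof. by rewrite mul_block_col !mul0mx addr0 add0r. Qed.

Lemma dot_calP n (Q : 'M[C]_n) (x1 x2 : 'cV[C]_n) :
  dot (calP Q *m col_mx x1 x2) (col_mx x1 x2) = dot (Q *m x1) x1 + dot (Q *m x2) x2.
Proof. by rewrite calP_col dot_col. Qed.

Lemma psd_calP n (Q : 'M[C]_n) : psd Q -> psd (calP Q).
Proof. by move=> pQ z; rewrite -[z]vsubmxK dot_calP addr_ge0. Qed.

Lemma posdef_calP n (Q : 'M[C]_n) : posdef Q -> posdef (calP Q).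
Proof.
move=> pQ z; rewrite -[z]vsubmxK dot_calP -col_mx0.
have [->|nz1] := eqVneq (usubmx z) 0.
  by rewrite mulmx0 dot0l add0r => nz2; apply: pQ; apply: contraNneq nz2 => ->.
by move=> _; rewrite ltr_wpDr ?(posdef_psd pQ) ?pQ.
Qed.

Lemma selfadj_calP n (Q : 'M[C]_n) : selfadj Q -> selfadj (calP Q).
Proof. by move=> hQ; rewrite /selfadj tr_block_mx map_block_mx !trmxC0 hQ. Qed.

Lemma bounded_by_diag n (A B Q : 'M[C]_n) : psd Q ->
  bounded_by A Q -> bounded_by B Q -> bounded_by (block_mx A 0 0 B) (calP Q).
Proof.
move=> pQ bA bB x w; rewrite -[x]vsubmxK -[w]vsubmxK !dot_calP.
rewrite mul_block_col !mul0mx addr0 add0r dot_col.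
by apply: sqr_norm_addr_le; rewrite ?pQ ?bA ?bB.
Qed.

Lemma bounded_by_offdiag n (A B Q : 'M[C]_n) : psd Q ->
  bounded_by A Q -> bounded_by B Q -> bounded_by (block_mx 0 A B 0) (calP Q).
Proof.
move=> pQ bA bB x w; rewrite -[x]vsubmxK -[w]vsubmxK !dot_calP [_ + dot _ (dsubmx x)]addrC.
rewrite mul_block_col !mul0mx addr0 add0r dot_col.
by apply: sqr_norm_addr_le; rewrite ?pQ ?bA ?bB.
Qed.

End BlockDiagonal.

Section GeneralizedEigen.
Variables (C : numClosedFieldType) (m : nat) (A Q : 'M[C]_m).
Hypotheses (hA : selfadj A) (hQ : selfadj Q) (pQ : posdef Q).
Local Open Scope sesquilinear_scope.

(* A positive definite matrix has trivial kernel, hence is invertible. *)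
Lemma posdef_unit : Q \in unitmx.
Proof.
rewrite -unitmx_tr -row_free_unit; apply/inj_row_free => v vQ0.
have QvT : Q *m v^T = 0 by rewrite -[Q]trmxK -trmx_mul vQ0 trmx0.
have [/eqP|nz] := eqVneq v^T 0; first by rewrite trmx_eq0 => /eqP.
by have := pQ nz; rewrite QvT dot0l ltxx.
Qed.

Lemma eigen_pencil lam : eigenvalue (invmx Q *m A) lam ->
  lam \is Num.real /\ exists2 z : 'cV[C]_m, z != 0 & A *m z = lam *: (Q *m z).
Proof.
move=> /eigenvalueP [v hv vnz]; set u := v *m invmx Q.
have uQ : u *m Q = v by rewrite mulmxKV // posdef_unit.
have nz : u ^t* != 0.
  by rewrite trmxC_eq0; apply: contraNneq vnz => u0; rewrite -uQ u0 mul0mx.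
have Az : A *m u ^t* = lam^* *: (Q *m u ^t*).
  by rewrite -{1}hA -trmxCM -mulmxA hv -{1}uQ trmxCZ trmxCM hQ.
have lamJ_real : lam^* \is Num.real.
  have Xp := pQ nz.
  have -> : lam^* = dot (A *m u ^t*) (u ^t*) / dot (Q *m u ^t*) (u ^t*).
    by rewrite Az dotZl mulfK // gt_eqF.
  by rewrite rpredM ?rpredV ?selfadj_dot_real ?gtr0_real.
have lam_real : lam \is Num.real by rewrite -CrealJ.
by split=> //; exists (u ^t*); rewrite // Az conj_Creal.
Qed.

Lemma pencil_eigen lam (z : 'cV[C]_m) : lam \is Num.real -> z != 0 ->
  A *m z = lam *: (Q *m z) -> eigenvalue (invmx Q *m A) lam.
Proof.
move=> lam_real nz Az; apply/eigenvalueP; exists (z ^t* *m Q).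
  by rewrite mulmxA mulmxK ?posdef_unit // -{1}hA -trmxCM Az trmxCZ trmxCM hQ conj_Creal.
apply: contraNneq nz => zQ0; rewrite -trmxC_eq0.
by rewrite -[z ^t*](mulmxK posdef_unit) zQ0 mul0mx.
Qed.

Lemma rayq_pencil_self lam (z : 'cV[C]_m) : z != 0 ->
  A *m z = lam *: (Q *m z) -> rayq A Q z z = `|lam|.
Proof.
move=> nz Az; have Xp := pQ nz.
rewrite /rayq /pnorm !innerE Az dotZl normrM -expr2 sqrtCK.
by rewrite (ger0_norm (ltW Xp)) mulfK ?gt_eqF.
Qed.

Lemma rayq_pencil_le lam (z w : 'cV[C]_m) : z != 0 -> w != 0 ->
  A *m z = lam *: (Q *m z) -> rayq A Q z w <= `|lam|.
Proof.
move=> nz nw Az; have Xp := pQ nz; have Wp := pQ nw.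
rewrite /rayq /pnorm !innerE Az dotZl normrM ler_pdivrMr ?mulr_gt0 ?sqrtC_gt0 //.
rewrite ler_wpM2l //.
by apply: norm_le_sqrtCM; [exact: ltW | exact: ltW | exact: cauchy_schwarz].
Qed.

End GeneralizedEigen.

Section Flip.
Variables (C : numClosedFieldType) (n : nat).

(* The conjugate-linear map  (x1, x2) |-> (conj x2, - conj x1); it commutes with
   calP(P) for real P and anticommutes with calM (lemma calM_flip below). *)
Definition flip (x : 'cV[C]_(n + n)) : 'cV[C]_(n + n) :=
  col_mx (map_mx conjC (dsubmx x)) (- map_mx conjC (usubmx x)).

Lemma flip_col (x1 x2 : 'cV[C]_n) :
  flip (col_mx x1 x2) = col_mx (map_mx conjC x2) (- map_mx conjC x1).
Proof. by rewrite /flip col_mxKu col_mxKd. Qed.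

Lemma flipZ k (x : 'cV[C]_(n + n)) : flip (k *: x) = k^* *: flip x.
Proof.
by rewrite -[x]vsubmxK scale_col_mx !flip_col !map_mxZ scale_col_mx scalerN.
Qed.

Lemma flip_eq0 (x : 'cV[C]_(n + n)) : (flip x == 0) = (x == 0).
Proof.
by rewrite -[x]vsubmxK flip_col !col_mx_eq0 oppr_eq0 !map_mx_eq0 andbC.
Qed.

Lemma calP_flip (P : 'M[C]_n) (x : 'cV[C]_(n + n)) : map_mx conjC P = P ->
  calP P *m flip x = flip (calP P *m x).
Proof.
move=> PJ; rewrite -[x]vsubmxK calP_col flip_col calP_col flip_col.
by rewrite !map_mxM PJ mulmxN.
Qed.

End Flip.

Section SaddlePoint.
Variables (C : numClosedFieldType) (n : nat) (M K : 'M[C]_n) (nu om : C).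
Hypotheses (hM : real_spd M) (hK : real_spd K) (nu_gt0 : 0 < nu) (om_ge0 : 0 <= om).

Definition precond : 'M[C]_n := M + sqrtC nu *: (K + om *: M).

Let s_gt0 : 0 < sqrtC nu. Proof. by rewrite sqrtC_gt0. Qed.
Let sJ : (sqrtC nu)^* = sqrtC nu. Proof. exact/conj_Creal/gtr0_real. Qed.
Let iomJ : ('i * om)^* = - ('i * om).
Proof. by rewrite rmorphM /= conjCi (conj_Creal (ger0_real om_ge0)) mulNr. Qed.

Lemma selfadj_precond : selfadj precond.
Proof.
rewrite /selfadj /precond ?(trmxCD, trmxCZ) sJ (conj_Creal (ger0_real om_ge0)).
by rewrite (real_spd_selfadj hM) (real_spd_selfadj hK).
Qed.

Lemma posdef_precond : posdef precond.
Proof.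
move=> z nz; rewrite /precond mulmxDl -scalemxAl mulmxDl -scalemxAl.
have psM := posdef_psd (real_spd_posdef hM); have psK := posdef_psd (real_spd_posdef hK).
rewrite dotDl dotZl dotDl dotZl ltr_wpDr ?real_spd_posdef //.
by rewrite mulr_ge0 ?addr_ge0 ?mulr_ge0 ?psM ?psK ?(ltW s_gt0).
Qed.

Lemma selfadj_calM : selfadj (calM M K nu om).
Proof.
rewrite /selfadj /calM tr_block_mx map_block_mx.
rewrite ?(trmxCZ, trmxCN, trmxCD).
by rewrite (real_spd_selfadj hM) (real_spd_selfadj hK) sJ iomJ scaleNr opprK.
Qed.

(* calM anticommutes with flip: conjugation swaps the two off-diagonal blocks. *)
Lemma calM_flip (x : 'cV[C]_(n + n)) :
  calM M K nu om *m flip x = - flip (calM M K nu om *m x).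
Proof.
have [x1 [x2 ->]] := col_mx_surj x.
rewrite flip_col /calM !mul_block_col flip_col opp_col_mx.
rewrite ?(map_mxD, map_mxN, map_mxM, map_mxZ) /= sJ iomJ.
rewrite (real_spd_conj hM) (real_spd_conj hK) !opprK !mulmxN mulNmx opprK.
by rewrite !scaleNr opprK mulNmx opprD opprK addrC [M *m _ + _]addrC.
Qed.

Lemma calM_spectrum_symmetric (P : 'M[C]_n) lam : real_spd P ->
  eigenvalue (invmx (calP P) *m calM M K nu om) lam ->
  lam \is Num.real /\ eigenvalue (invmx (calP P) *m calM M K nu om) (- lam).
Proof.
move=> hP ev; have sA := selfadj_calM.
have sP := selfadj_calP (real_spd_selfadj hP).
have pP := posdef_calP (real_spd_posdef hP).
have [lam_real [z nz Az]] := eigen_pencil sA sP pP ev.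
split=> //; apply: (@pencil_eigen _ _ _ _ sA sP pP _ (flip z)).
- by rewrite rpredN.
- by rewrite flip_eq0.
- by rewrite calM_flip Az flipZ (conj_Creal lam_real) calP_flip ?real_spd_conj // scaleNr.
Qed.

(* calM splits into three pieces, each bounded by a block of calP(precond). *)
Lemma calM_split : calM M K nu om = block_mx M 0 0 (- M) +
  sqrtC nu *: block_mx 0 K K 0 + (sqrtC nu * om) *: block_mx 0 (- ('i *: M)) ('i *: M) 0.
Proof.
rewrite /calM !scale_block_mx !add_block_mx !scaler0 !addr0 !add0r.
by rewrite !scalerDr !scalerN !scalerA (mulrC 'i) mulrA.
Qed.

Lemma calP_precond_split : calP precond =
  calP M + `|sqrtC nu| *: calP K + `|sqrtC nu * om| *: calP M.
Proof.
rewrite /calP /precond !scale_block_mx !add_block_mx !scaler0 !addr0.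
rewrite (ger0_norm (ltW s_gt0)) ger0_norm ?mulr_ge0 ?(ltW s_gt0) //.
by rewrite scalerDr scalerA addrA.
Qed.

Lemma calM_bounded : bounded_by (calM M K nu om) (calP precond).
Proof.
have pM := real_spd_posdef hM; have pK := real_spd_posdef hK.
have bM := bounded_by_self (real_spd_selfadj hM) pM.
have bK := bounded_by_self (real_spd_selfadj hK) pK.
have psM := posdef_psd pM; have psK := posdef_psd pK.
have psdM := psd_calP psM; have psdK := psd_calP psK.
have b1 : bounded_by (block_mx M 0 0 (- M)) (calP M).
  apply: bounded_by_diag; rewrite // -scaleN1r.
  by apply: bounded_by_unitZ; rewrite ?normrN ?normr1.
have b2 : bounded_by (block_mx 0 K K 0) (calP K) by apply: bounded_by_offdiag.
have b3 : bounded_by (block_mx 0 (- ('i *: M)) ('i *: M) 0) (calP M).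
  apply: bounded_by_offdiag; rewrite // -?scaleNr;
  by apply: bounded_by_unitZ; rewrite ?normrN ?normCi.
rewrite calM_split calP_precond_split.
apply: bounded_byD.
- exact: psdD (psdZ (normr_ge0 _) psdK).
- exact: psdZ (normr_ge0 _) psdM.
- by apply: bounded_byD; [| exact: psdZ (normr_ge0 _) psdK | | exact: bounded_byZ].
- exact: bounded_byZ.
Qed.

Let conj1Bi : (1 - 'i : C)^* = 1 + 'i.
Proof. by rewrite rmorphB /= rmorph1 conjCi opprK. Qed.
Let conj1Di : (1 + 'i : C)^* = 1 - 'i.
Proof. by rewrite rmorphD /= rmorph1 conjCi. Qed.


Ltac dot_expand := repeat progress rewrite ?(mulmxDl, mulmxBl, mulNmx, mulmxDr,
  mulmxBr, mulmxN, dotDl, dotBl, dotNl, dotZl, dotDr, dotBr, dotNr, dotZr)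
  -?scalemxAl -?scalemxAr.

(* The test vector realising the inf-sup bound for x = (x1, x2). *)
Definition testvec (x : 'cV[C]_(n + n)) : 'cV[C]_(n + n) :=
  col_mx (usubmx x + (1 - 'i) *: dsubmx x) ((1 + 'i) *: usubmx x - dsubmx x).

Lemma testvec_re (x : 'cV[C]_(n + n)) :
  let c := dot (calM M K nu om *m x) (testvec x) in
  c + c^* = 2 * dot (calP precond *m x) x.
Proof.
rewrite /= (selfadj_dotC _ _ selfadj_calM).
have [x1 [x2 ->]] := col_mx_surj x.
rewrite /testvec col_mxKu col_mxKd calP_col /calM !mul_block_col !dot_col /precond.
dot_expand.
rewrite conj1Bi conj1Di; move: (@mulCii C) => i2; ring: i2.
Qed.

Lemma testvec_norm (x : 'cV[C]_(n + n)) :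
  dot (calP precond *m testvec x) (testvec x) = 3 * dot (calP precond *m x) x.
Proof.
have [x1 [x2 ->]] := col_mx_surj x.
rewrite /testvec col_mxKu col_mxKd !calP_col !dot_col /precond.
dot_expand.
rewrite conj1Bi conj1Di; move: (@mulCii C) => i2; ring: i2.
Qed.

Lemma calM_infsup (x : 'cV[C]_(n + n)) : x != 0 ->
  testvec x != 0 /\ 1 / sqrtC 3 <= rayq (calM M K nu om) (calP precond) x (testvec x).
Proof.
move=> nz; have Xp := posdef_calP posdef_precond nz.
set X := dot (calP precond *m x) x in Xp; set c := dot (calM M K nu om *m x) (testvec x).
have X3p : 0 < 3 * X by rewrite mulr_gt0.
have nw : testvec x != 0.
  by apply: contraTneq X3p => w0; rewrite -testvec_norm w0 mulmx0 dot0l ltxx.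
have ReX : 'Re c = X by rewrite ReE testvec_re mulrC mulKf ?pnatr_eq0.
have X_le_c : X <= `|c| by rewrite -ReX (leif_Re_Creal c).1.
split=> //; rewrite /rayq /pnorm !innerE -/X -/c testvec_norm sqrtCM ?nnegrE ?(ltW Xp) //.
have s3 : 0 < sqrtC 3 :> C by rewrite sqrtC_gt0.
rewrite mulrCA -expr2 sqrtCK ler_pdivlMr ?mulr_gt0 //.
by rewrite mulrA mul1r mulVf ?gt_eqF // mul1r.
Qed.

Lemma calM_eigen_bounds lam :
  eigenvalue (invmx (calP precond) *m calM M K nu om) lam ->
  lam \is Num.real /\ 1 / sqrtC 3 <= `|lam| <= 1.
Proof.
move=> ev; have sA := selfadj_calM; have sP := selfadj_calP selfadj_precond.
have pP := posdef_calP posdef_precond.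
have [lam_real [z nz Az]] := eigen_pencil sA sP pP ev.
have [nw lb] := calM_infsup nz.
split=> //; apply/andP; split.
  exact: le_trans lb (rayq_pencil_le sP pP nz nw Az).
by rewrite -(rayq_pencil_self pP nz Az) (rayq_le1 pP calM_bounded).
Qed.

End SaddlePoint.

Unset Implicit Arguments.
Theorem theorem5 (C : numClosedFieldType) (n : nat) (M K : 'M[C]_n) (nu om : C) :
  real_spd M -> real_spd K ->
  nu \is Num.real -> 0 < nu -> om \is Num.real -> 0 <= om ->
  (forall P : 'M[C]_n, real_spd P ->
     forall lam : C, eigenvalue (invmx (calP P) *m calM M K nu om) lam ->
       lam \is Num.real /\ eigenvalue (invmx (calP P) *m calM M K nu om) (- lam))
  /\
  (let P := M + sqrtC nu *: (K + om *: M) in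
   let A := calM M K nu om in
   let PP := calP P in
   (forall x : 'cV[C]_(n + n), x != 0 ->
      forall c : C, c \is Num.real -> c < 1 / sqrtC 3 ->
        exists2 w : 'cV[C]_(n + n), w != 0 & c < rayq A PP x w)
   /\
   (forall x w : 'cV[C]_(n + n), x != 0 -> w != 0 -> rayq A PP x w <= 1)
   /\
   (forall lam : C, eigenvalue (invmx PP *m A) lam ->
      lam \is Num.real /\ 1 / sqrtC 3 <= `|lam| <= 1)).
Proof.
move=> hM hK _ nu_gt0 _ om_ge0; split.
  by move=> P hP lam; exact: calM_spectrum_symmetric.
have pP := posdef_calP (posdef_precond hM hK nu_gt0 om_ge0).
split; [|split].
- move=> x nz c _ c_lt; have [nw lb] := calM_infsup hM hK nu_gt0 om_ge0 nz.
  by exists (testvec x) => //; exact: lt_le_trans c_lt lb.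
- by move=> x w; apply: rayq_le1 pP (calM_bounded hM hK nu_gt0 om_ge0).
- exact: calM_eigen_bounds.
Qed.
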